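(* Let $G=(\mathcal{S},\mathcal{A})$ be a finite directed acyclic graph with a unique state $s_0\in\mathcal{S}$ having no incoming edges, and let $\mathcal{X}\subseteq\mathcal{S}$ be the set of states with no outgoing edges (terminal states), so that every $s\in\mathcal{S}\setminus\mathcal{X}$ has at least one child. Let $R:\mathcal{X}\to(0,\infty)$ be a reward function. Let $F:\mathcal{S}\to(0,\infty)$ be a state flow function, and for each non-terminal state $s\in\mathcal{S}\setminus\mathcal{X}$ let $A(\cdot\mid s)$ be a probability distribution on the children of $s$, i.e. $A(s'\mid s)\ge 0$ for $(s\to s')\in\mathcal{A}$ and $\sum_{s':(s\to s')\in\mathcal{A}}A(s'\mid s)=1$. Define, for every state $s'\neq s_0$, the Bifurcated GFlowNet loss $$\mathcal{L}_{\mathrm{BN}}(s')=\Big(\log\sum_{s:(s\to s')\in\mathcal{A}}F(s)A(s'\mid s)-\log T(s')\Big)^2,$$ where $T(s')=F(s')$ if $s'\notin\mathcal{X}$ and $T(s')=R(s')$ if $s'\in\mathcal{X}$. Suppose $\mathcal{L}_{\mathrm{BN}}(s')=0$ for all states $s'\neq s_0$. Then, for the Markov chain that starts at $s_0$ and, at each non-terminal state $s$, moves to a child $s'$ with probability $A(s'\mid s)$ until it reaches a terminal state, the probability of terminating at $x\in\mathcal{X}$ equals $R(x)/\sum_{y\in\mathcal{X}}R(y)$; that is, the policy $A$ samples terminal states proportionally to the reward.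
   Context: Here $(s\to s')\in\mathcal{A}$ denotes a directed edge (action) from $s$ to $s'$; $s$ is then a parent of $s'$ and $s'$ a child of $s$. The quantity $F(s)A(s'\mid s)$ is interpreted as the edge flow $F(s\to s')$, so the loss condition says that the total inflow into each non-initial, non-terminal state equals its state flow, and the total inflow into each terminal state equals its reward. *)

From HB Require Import structures.
From mathcomp Require Import all_boot all_order all_algebra.
From mathcomp Require Import all_classical all_reals all_analysis.
Set Implicit Arguments. Unset Strict Implicit. Unset Printing Implicit Defensive.
Import Order.TTheory GRing.Theory Num.Theory.
Local Open Scope ring_scope.

Section GFN.
Variables (R : realType) (S : finType).

Definition terminal (E : rel S) (s : S) : bool := [forall t, ~~ E s t].

Definition no_incoming (E : rel S) (s : S) : bool := [forall t, ~~ E t s].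

Definition acyclic (E : rel S) : Prop := forall s t, E s t -> ~~ connect E t s.

Definition inflow (E : rel S) (F : S -> R) (A : S -> S -> R) (s' : S) : R :=
  \sum_(s | E s s') F s * A s s'.

Definition target (E : rel S) (F Rw : S -> R) (s' : S) : R :=
  if terminal E s' then Rw s' else F s'.

Definition BN_loss (E : rel S) (F Rw : S -> R) (A : S -> S -> R) (s' : S) : R :=
  (ln (inflow E F A s') - ln (target E F Rw s')) ^+ 2.

(* Transition kernel of the Markov chain; terminal states are absorbing. *)
Definition step (E : rel S) (A : S -> S -> R) (s t : S) : R :=
  if terminal E s then (s == t)%:R else if E s t then A s t else 0.

Fixpoint chain_dist (E : rel S) (A : S -> S -> R) (s0 : S) (n : nat) : S -> R :=
  match n with
  | 0 => fun t => (t == s0)%:R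
  | n'.+1 => fun t => \sum_s chain_dist E A s0 n' s * step E A s t
  end.

End GFN.

From HB Require Import structures.
From mathcomp Require Import all_boot all_order all_algebra.
From mathcomp Require Import all_classical all_reals all_analysis.
Import Order.TTheory GRing.Theory Num.Theory.
Import numFieldNormedType.Exports.
Local Open Scope classical_set_scope.
Local Open Scope ring_scope.
Set Implicit Arguments. Unset Strict Implicit.

(* A non-terminal state t can only be occupied before time rank t (the
   number of its ancestors), so the expected number of visits to t is a
   finite sum.  Zero loss says F is a flow: the inflow into t is F t at
   non-terminal states and R t at terminal ones.  Unfolding the chain one
   step backwards shows, by induction along the DAG, that the expected
   number of visits to a non-terminal t is F t / F s0, so the eventual
   mass at a terminal x is R x / F s0.  Since the total mass stays 1 and
   eventually sits on terminal states, F s0 is the total reward. *)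

Section Graph.
Variables (S : finType) (E : rel S).

Lemma terminal_edgeF s t : terminal E s -> E s t = false.
Proof. by move=> /forallP /(_ t) /negbTE. Qed.

Lemma edge_nonterminal s t : E s t -> ~~ terminal E s.
Proof. by apply: contraTN => /terminal_edgeF ->. Qed.

Definition rank (t : S) : nat := #|[pred u | connect E u t]|.

Lemma rank_gt0 t : (0 < rank t)%N.
Proof. by apply/card_gt0P; exists t; rewrite unfold_in /= connect0. Qed.

Lemma rank_le_card t : (rank t <= #|S|)%N.
Proof. exact: max_card. Qed.

Hypothesis E_acyclic : acyclic E.

Lemma rank_edge_lt s t : E s t -> (rank s < rank t)%N.
Proof.
move=> Est; apply: proper_card; apply/properP; split.
  apply/fintype.subsetP => u; rewrite !unfold_in /= => Eus.
  exact: connect_trans Eus (connect1 Est).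
by exists t; rewrite !unfold_in /= ?connect0 ?E_acyclic.
Qed.

Variable s0 : S.
Hypothesis unique_source : forall s, no_incoming E s = (s == s0).

Lemma source_edgeF s : E s s0 = false.
Proof. by have := unique_source s0; rewrite eqxx => /forallP /(_ s) /negbTE. Qed.

Lemma connect_from_source t : connect E s0 t.
Proof.
elim: {t}(rank t).+1 {-2}t (ltnSn (rank t)) => // m IHm t rk_t.
have [->|t_s0] := eqVneq t s0; first exact: connect0.
have := unique_source t; rewrite (negbTE t_s0) => /negbT /forallPn [s].
rewrite negbK => Est.
exact: connect_trans (IHm s (leq_trans (rank_edge_lt Est) rk_t)) (connect1 Est).
Qed.

Lemma terminal_source_all t : terminal E s0 -> t = s0.
Proof.
move=> term_s0; case/connectP: (connect_from_source t) => [[|u p]] /=.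
  by move=> _ ->.
by rewrite terminal_edgeF.
Qed.

End Graph.

Lemma ln_sqr_diff_eq0 (R : realType) (a b : R) :
  0 < a -> 0 < b -> (ln a - ln b) ^+ 2 = 0 -> a = b.
Proof.
move=> a_gt0 b_gt0 /eqP; rewrite sqrf_eq0 subr_eq0 => /eqP.
by apply: ln_inj; rewrite posrE.
Qed.

Section Chain.
Variables (R : realType) (S : finType) (E : rel S) (A : S -> S -> R) (s0 : S).

Local Notation P := (chain_dist E A s0).

Lemma step_nonterminal s t :
  ~~ terminal E t -> step E A s t = if E s t then A s t else 0.
Proof.
move=> nterm_t; rewrite /step; case: ifP => // term_s.
rewrite (terminal_edgeF t term_s); case: eqP => // s_t.
by rewrite -s_t term_s in nterm_t.
Qed.

Lemma step_terminal s t :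
  terminal E t -> step E A s t = (s == t)%:R + (if E s t then A s t else 0).
Proof.
move=> term_t; rewrite /step; case: ifP => term_s.
  by rewrite (terminal_edgeF t term_s) addr0.
by case: eqP => [s_t|_]; [rewrite s_t term_t in term_s | rewrite add0r].
Qed.

Lemma chain_dist_succ_nonterminal n t :
  ~~ terminal E t -> P n.+1 t = \sum_(s | E s t) P n s * A s t.
Proof.
move=> nterm_t; rewrite /= [RHS]big_mkcond; apply: eq_bigr => s _.
by rewrite step_nonterminal //; case: ifP; rewrite ?mulr0.
Qed.

Lemma chain_dist_succ_terminal n t :
  terminal E t -> P n.+1 t = P n t + \sum_(s | E s t) P n s * A s t.
Proof.
move=> term_t /=; under eq_bigr => s _ do rewrite step_terminal // mulrDr.
rewrite big_split /=; congr (_ + _).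
  rewrite (bigD1 t) //= eqxx mulr1 big1 ?addr0 // => s /negbTE ->.
  by rewrite mulr0.
by rewrite [RHS]big_mkcond; apply: eq_bigr => s _; case: ifP; rewrite ?mulr0.
Qed.

Hypothesis A_stochastic :
  forall s, ~~ terminal E s -> \sum_(s' | E s s') A s s' = 1.

Lemma step_sum1 s : \sum_t step E A s t = 1.
Proof.
rewrite /step; have [term_s|nterm_s] := boolP (terminal E s).
  by rewrite (bigD1 s) //= eqxx big1 ?addr0 // => t; rewrite eq_sym => /negbTE ->.
by rewrite -big_mkcond A_stochastic.
Qed.

Lemma chain_dist_sum1 n : \sum_t P n t = 1.
Proof.
elim: n => [|n IHn].
  by rewrite (bigD1 s0) //= eqxx big1 ?addr0 // => t /negbTE ->.
rewrite /= exchange_big /= -IHn; apply: eq_bigr => s _.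
by rewrite -mulr_sumr step_sum1 mulr1.
Qed.

Hypothesis E_acyclic : acyclic E.

Lemma chain_dist_nonterminal_eq0 n t :
  ~~ terminal E t -> (rank E t <= n)%N -> P n t = 0.
Proof.
elim: n t => [|n IHn] t nterm_t rk_t.
  by move: (rank_gt0 E t); rewrite ltnNge rk_t.
rewrite chain_dist_succ_nonterminal // big1 // => s Est.
rewrite IHn ?mul0r ?(edge_nonterminal Est) //.
exact: leq_trans (rank_edge_lt E_acyclic Est) rk_t.
Qed.

Definition occupation (n : nat) (t : S) : R := \sum_(0 <= k < n) P k t.

Lemma occupation_stable n t :
  ~~ terminal E t -> (#|S| <= n)%N -> occupation n t = occupation #|S| t.
Proof.
move=> nterm_t le_S_n; rewrite /occupation (big_cat_nat (leq0n _) le_S_n) /=.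
rewrite -[RHS]addr0; congr (_ + _).
rewrite big_nat_cond big1 // => k /andP[/andP[le_S_k _] _].
by rewrite chain_dist_nonterminal_eq0 // (leq_trans (rank_le_card E t)).
Qed.

Lemma chain_dist_terminal_occupation n y : terminal E y -> y != s0 ->
  P n y = \sum_(s | E s y) A s y * occupation n s.
Proof.
move=> term_y y_s0; elim: n => [|n IHn].
  by rewrite /= (negbTE y_s0) big1 // => s _; rewrite /occupation big_geq ?mulr0.
rewrite chain_dist_succ_terminal // IHn -big_split /=; apply: eq_bigr => s _.
by rewrite /occupation big_nat_recr //= mulrDr [P n s * _]mulrC.
Qed.

Hypothesis unique_source : forall s, no_incoming E s = (s == s0).

Variables (F Rw : S -> R).
Hypothesis F_neq0 : F s0 != 0.
Hypothesis flow_conservation :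
  forall t, t != s0 -> inflow E F A t = target E F Rw t.

Lemma occupation_nonterminal t :
  ~~ terminal E t -> occupation #|S| t = F t / F s0.
Proof.
elim: {t}(rank E t).+1 {-2}t (ltnSn (rank E t)) => // m IHm t rk_t nterm_t.
rewrite -(occupation_stable _ (leqnSn _)) // /occupation big_nat_recl //.
under eq_bigr => k _ do rewrite chain_dist_succ_nonterminal //.
have [->|t_s0] := eqVneq t s0.
  rewrite [P 0 _]/= eqxx divff // big1 ?addr0 // => k _.
  by rewrite big_pred0 // => s; rewrite (source_edgeF unique_source).
rewrite [P 0 _]/= (negbTE t_s0) add0r exchange_big /=.
have -> : F t = inflow E F A t by rewrite flow_conservation // /target (negbTE nterm_t).
rewrite /inflow mulr_suml; apply: eq_bigr => s Est.
rewrite -mulr_suml -/(occupation _ s) IHm ?(edge_nonterminal Est) 1?mulrAC //.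
exact: leq_trans (rank_edge_lt E_acyclic Est) rk_t.
Qed.

Lemma chain_dist_terminal_eventually n y : terminal E y -> y != s0 ->
  (#|S| <= n)%N -> P n y = Rw y / F s0.
Proof.
move=> term_y y_s0 le_S_n; rewrite chain_dist_terminal_occupation //.
have -> : Rw y = inflow E F A y by rewrite flow_conservation // /target term_y.
rewrite /inflow mulr_suml; apply: eq_bigr => s Est.
have nterm_s := edge_nonterminal Est.
by rewrite occupation_stable // occupation_nonterminal // mulrA [A s y * _]mulrC.
Qed.

Lemma total_reward : ~~ terminal E s0 -> \sum_(y | terminal E y) Rw y = F s0.
Proof.
move=> nterm_s0; have := chain_dist_sum1 #|S|; rewrite (bigID (terminal E)) /=.
rewrite [X in _ + X]big1 ?addr0 => [|t nterm_t]; last first.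
  exact: chain_dist_nonterminal_eq0 (rank_le_card E t).
under eq_bigr => y term_y.
  rewrite chain_dist_terminal_eventually //; last by apply: contraNneq nterm_s0 => <-.
over.
by rewrite -mulr_suml => /(congr1 ( *%R^~ (F s0))); rewrite mulfVK // mul1r.
Qed.

End Chain.

Unset Implicit Arguments.

Theorem theorem4p1 (R : realType) (S : finType) (E : rel S) (s0 : S)
    (Rw F : S -> R) (A : S -> S -> R)
    (Hacyc : acyclic E)
    (Hsrc : forall s, no_incoming E s = (s == s0))
    (HR : forall x, terminal E x -> 0 < Rw x)
    (HF : forall s, 0 < F s)
    (HA0 : forall s s', E s s' -> 0 <= A s s')
    (HA1 : forall s, ~~ terminal E s -> \sum_(s' | E s s') A s s' = 1)
    (Hloss : forall s', s' != s0 ->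
       0 < inflow E F A s' /\ BN_loss E F Rw A s' = 0) :
  forall x, terminal E x ->
    (fun n => chain_dist E A s0 n x) @ \oo
      --> Rw x / \sum_(y | terminal E y) Rw y.
Proof.
move=> x term_x; apply: cvg_near_cst.
have [term_s0|nterm_s0] := boolP (terminal E s0).
  have all_s0 t : t = s0 by exact: terminal_source_all Hsrc t term_s0.
  rewrite (all_s0 x) (big_pred1 s0) => [|y]; last by rewrite (all_s0 y) term_s0 /= eqxx.
  rewrite divff ?gt_eqF ?HR //; near=> n.
  by rewrite -(chain_dist_sum1 s0 HA1 n) (big_pred1 s0) // => t; rewrite (all_s0 t) /= eqxx.
have flow t : t != s0 -> inflow E F A t = target E F Rw t.
  move=> /Hloss [inflow_gt0 /ln_sqr_diff_eq0]; apply=> //.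
  by rewrite /target; case: ifP => [/HR|_].
have F0 : F s0 != 0 := lt0r_neq0 (HF s0).
rewrite (total_reward HA1 Hacyc Hsrc F0 flow nterm_s0); near=> n.
apply: (chain_dist_terminal_eventually Hacyc Hsrc F0 flow term_x).
  by apply: contraNneq nterm_s0 => <-.
near: n; exists #|S| => //.
Unshelve. all: by end_near.
Qed.
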